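(* Let $\Phi$ be a (Bourbaki) root system, $D$ a set of simple roots, $\Phi^+$ the positive roots with respect to $D$, $J\subseteq D$, and $\pi_J\colon\mathbb Z\Phi\to\mathbb Z\Phi/\mathbb Z(D\setminus J)$ the natural projection. Let $\alpha\in\pi_J(\Phi^+)\setminus\{0\}$ be such that $\alpha\neq m\alpha_0$ for every integer $m\ge1$ and every $\alpha_0\in\pi_J(D)\setminus\{0\}$. Then there exist non-collinear $\beta\in\pi_J(\Phi^+)\setminus\{0\}$ and $\gamma\in\pi_J(J)$ with $\alpha=\beta+\gamma$. *)

From HB Require Import structures.
From mathcomp Require Import all_boot all_order all_algebra.
Set Implicit Arguments. Unset Strict Implicit. Unset Printing Implicit Defensive.
Import Order.TTheory GRing.Theory Num.Theory.
Local Open Scope ring_scope.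

(* Root systems in the concrete vector space V = 'rV[R]_n over a real field R.
   A finite subset of V is represented by a seq (membership via \in). *)
Section RootSystems.
Variables (R : realFieldType) (n : nat).
Local Notation V := 'rV[R]_n.

Definition pairing (x : V) (c : 'cV[R]_n) : R := (x *m c) 0 0.

(* Bourbaki's definition of a (crystallographic, not necessarily reduced)
   root system in V:
   (RS I)  finite, does not contain 0, spans V;
   (RS II) for each a there is a coroot a^v in V* with <a,a^v> = 2 and the
           reflection x |-> x - <x,a^v> a leaves Phi stable;
   (RS III) <b,a^v> is an integer for all b in Phi. *)
Definition is_root_system (Phi : seq V) : Prop :=
  [/\ 0 \notin Phi, (<<Phi>>)%VS = fullv &
   forall a, a \in Phi -> exists c : 'cV[R]_n,
     [/\ pairing a c = 2,
         forall b, b \in Phi -> b - pairing b c *: a \in Phi &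
         forall b, b \in Phi -> exists k : int, pairing b c = k%:~R]].

Definition in_Zspan (S : seq V) (x : V) : Prop :=
  exists k : V -> int, x = \sum_(s <- S) s *~ k s.

Definition in_Nspan (S : seq V) (x : V) : Prop :=
  exists k : V -> nat, x = \sum_(s <- S) s *+ k s.

Definition is_base (Phi D : seq V) : Prop :=
  [/\ {subset D <= Phi}, uniq D, free D, (<<D>>)%VS = fullv &
   forall b, b \in Phi -> in_Nspan D b \/ in_Nspan D (- b)].

Definition positive_root (Phi D : seq V) (b : V) : Prop :=
  b \in Phi /\ in_Nspan D b.

Definition DminusJ (D J : seq V) : seq V := [seq d <- D | d \notin J].

(* pi_J x = pi_J y in ZPhi / Z(D \ J) *)
Definition congJ (D J : seq V) (x y : V) : Prop :=
  in_Zspan (DminusJ D J) (x - y).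

(* pi_J x and pi_J y are collinear in the (torsion-free) group
   ZPhi / Z(D \ J): a nontrivial integer relation between them. *)
Definition collinearJ (D J : seq V) (x y : V) : Prop :=
  exists p q : int, ((p != 0) || (q != 0)) /\ congJ D J (x *~ p + y *~ q) 0.

End RootSystems.

(* The hypothesis on alpha says that the coefficients of a on J are positive
   at two distinct simple roots of J.  Walk down from a by subtracting simple
   roots: a positive root x that is not simple has a simple root d with x - d
   a root, because the coroot form (x, y) = sum_c <x, c^v> <y, c^v> is
   invariant under reflections, so (x, d) > 0 for some d in the support of x,
   and then Cauchy-Schwarz forces x = d, <x, d^v> = 1 or <d, x^v> = 1.
   Subtracting simple roots outside J does not change pi_J, and the walk
   cannot end at a simple root without subtracting one in J, since pi_J(a) is
   not a multiple of a single pi_J(d).  At the first step x = b + g with g in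
   J, the root b keeps a positive coefficient at some simple root of J other
   than g, so pi_J(b) and pi_J(g) are not collinear. *)

From Stdlib Require Import ClassicalEpsilon.
From HB Require Import structures.
From mathcomp Require Import all_boot all_order all_algebra.
From mathcomp Require Import zify ring lra.
Set Implicit Arguments. Unset Strict Implicit. Unset Printing Implicit Defensive.
Import Order.TTheory GRing.Theory Num.Theory.
Local Open Scope ring_scope.

Section Reflections.
Variables (R : realFieldType) (n : nat).
Local Notation V := 'rV[R]_n.

Lemma pairingD (x y : V) c : pairing (x + y) c = pairing x c + pairing y c.
Proof. by rewrite /pairing mulmxDl mxE. Qed.

Lemma pairingZ t (x : V) c : pairing (t *: x) c = t * pairing x c.
Proof. by rewrite /pairing -scalemxAl mxE. Qed.

Lemma pairingB (x y : V) c : pairing (x - y) c = pairing x c - pairing y c.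
Proof. by rewrite pairingD -scaleN1r pairingZ mulN1r. Qed.

Lemma pairingA (x : V) (M : 'M[R]_n) c : pairing (x *m M) c = pairing x (M *m c).
Proof. by rewrite /pairing mulmxA. Qed.

Definition reflmx (a : V) (c : 'cV[R]_n) : 'M[R]_n := 1%:M - c *m a.

Lemma reflmxE (x a : V) c : x *m reflmx a c = x - pairing x c *: a.
Proof.
by rewrite mulmxBr mulmx1 mulmxA [x *m c]mx11_scalar mul_scalar_mx.
Qed.

Lemma reflmx_root (a : V) c : pairing a c = 2 -> a *m reflmx a c = - a.
Proof.
move=> ac2; rewrite reflmxE ac2 -{1}(scale1r a) -scalerBl.
by rewrite (_ : 1 - 2 = -1 :> R) ?scaleN1r //; ring.
Qed.

Lemma reflmx_fix (x a : V) c : pairing x c = 0 -> x *m reflmx a c = x.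
Proof. by move=> xc0; rewrite reflmxE xc0 scale0r subr0. Qed.

Lemma reflmxK (a : V) c : pairing a c = 2 ->
  cancel (fun x : V => x *m reflmx a c) (fun x : V => x *m reflmx a c).
Proof.
move=> ac2 x /=; rewrite [x *m _]reflmxE mulmxBl -scalemxAl reflmx_root //.
by rewrite reflmxE scalerN opprK subrK.
Qed.

Lemma stable_translation_eq0 (S : seq V) (M : 'M[R]_n) (x v : V) :
  {in S, forall y, y *m M \in S} -> x \in S ->
  v *m M = v -> x *m M = x + v -> v = 0.
Proof.
move=> stableS xS vM xM.
have orbit j : x + j%:R *: v \in S.
  elim: j => [|j IH]; first by rewrite scale0r addr0.
  have := stableS _ IH; rewrite mulmxDl -scalemxAl vM xM.
  by rewrite mulrS scalerDl scale1r addrA.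
apply/eqP; apply: contraT => v0.
have inj_orbit : injective (fun j : nat => x + j%:R *: v).
  move=> i j /addrI /eqP; rewrite -subr_eq0 -scalerBl scaler_eq0 (negbTE v0).
  by rewrite orbF subr_eq0 eqr_nat => /eqP.
have := @uniq_leq_size _ [seq x + j%:R *: v | j <- iota 0 (size S).+1] S.
rewrite map_inj_uniq // iota_uniq size_map size_iota ltnn => /(_ isT); apply.
by move=> y /mapP [j _ ->].
Qed.

Definition coroot (Phi : seq V) (a : V) (c : 'cV[R]_n) : Prop :=
  [/\ pairing a c = 2, {in Phi, forall b, b *m reflmx a c \in Phi} &
      {in Phi, forall b, exists k : int, pairing b c = k%:~R}].

Lemma coroot_unique (Phi : seq V) (a : V) c1 c2 : a != 0 ->
  coroot Phi a c1 -> coroot Phi a c2 ->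
  {in Phi, forall x, pairing x c1 = pairing x c2}.
Proof.
move=> a0 [ac1 st1 _] [ac2 st2 _] x xPhi.
(* s_{c1} s_{c2} fixes a and translates x by (<x, c2> - <x, c1>) a. *)
pose t := pairing x c2 - pairing x c1.
have : t *: a = 0.
  apply: (@stable_translation_eq0 Phi (reflmx a c2 *m reflmx a c1) x).
  - by move=> y yPhi; rewrite mulmxA; apply/st1/st2.
  - exact: xPhi.
  - by rewrite -scalemxAl mulmxA reflmx_root // mulNmx reflmx_root // opprK.
  rewrite mulmxA [x *m _]reflmxE mulmxBl -scalemxAl reflmx_root // reflmxE.
  by rewrite /t scalerBl scalerN opprK addrAC addrA.
by move/eqP; rewrite scaler_eq0 (negbTE a0) orbF subr_eq0 => /eqP.
Qed.

End Reflections.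

Lemma coroots_exist (R : realFieldType) (n : nat) (Phi : seq 'rV[R]_n) :
  is_root_system Phi ->
  exists cor : 'rV[R]_n -> 'cV[R]_n, {in Phi, forall a, coroot Phi a (cor a)}.
Proof.
case=> _ _ hasCoroot.
exists (fun a => epsilon (inhabits 0) (coroot Phi a)) => a aPhi.
apply: epsilon_spec; have [c [ac2 stable integral]] := hasCoroot a aPhi.
by exists c; split=> // b bPhi; rewrite reflmxE; apply: stable.
Qed.

Section CorootForm.
Variables (R : realFieldType) (n : nat) (Phi : seq 'rV[R]_n).
Variable cor : 'rV[R]_n -> 'cV[R]_n.
Hypothesis Phi0 : 0 \notin Phi.
Hypothesis corP : {in Phi, forall a, coroot Phi a (cor a)}.
Local Notation V := 'rV[R]_n.
Local Notation refl a := (reflmx a (cor a)).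

Lemma root_neq0 a : a \in Phi -> a != 0.
Proof. by apply: contraTneq => ->. Qed.

Lemma pairing_coroot a : a \in Phi -> pairing a (cor a) = 2.
Proof. by case/corP. Qed.

Lemma refl_root a b : a \in Phi -> b \in Phi -> b *m refl a \in Phi.
Proof. by case/corP=> _ + _; apply. Qed.

Lemma oppr_root a : a \in Phi -> - a \in Phi.
Proof. by move=> aPhi; rewrite -(reflmx_root (pairing_coroot aPhi)) refl_root. Qed.

Lemma pairing_coroot_int a b : a \in Phi -> b \in Phi ->
  exists k : int, pairing b (cor a) = k%:~R.
Proof. by case/corP=> _ _; apply. Qed.

Lemma pairing_coroot_refl a b : a \in Phi -> b \in Phi ->
  {in Phi, forall y, pairing y (cor (a *m refl b)) = pairing (y *m refl b) (cor a)}.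
Proof.
move=> aPhi bPhi y yPhi; have bK := reflmxK (pairing_coroot bPhi).
have abPhi := refl_root bPhi aPhi.
rewrite pairingA; apply: (coroot_unique (root_neq0 abPhi) (corP abPhi)) => //.
split.
- by rewrite -pairingA bK pairing_coroot.
- move=> z zPhi; rewrite reflmxE -pairingA.
  have -> : z - pairing (z *m refl b) (cor a) *: (a *m refl b) =
            z *m refl b *m refl a *m refl b.
    by rewrite [_ *m refl a]reflmxE mulmxBl -scalemxAl bK.
  exact: refl_root bPhi (refl_root aPhi (refl_root bPhi zPhi)).
- by move=> z zPhi; rewrite -pairingA; apply: pairing_coroot_int; rewrite ?refl_root.
Qed.

Lemma root_eq_of_pairing2 x d : x \in Phi -> d \in Phi ->
  pairing x (cor d) = 2 -> pairing d (cor x) = 2 -> x = d.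
Proof.
move=> xPhi dPhi xd2 dx2.
have fix_x : pairing (x - d) (cor x) = 0 by rewrite pairingB pairing_coroot // dx2 subrr.
have fix_d : pairing (x - d) (cor d) = 0 by rewrite pairingB pairing_coroot // xd2 subrr.
(* s_x s_d fixes x - d and translates x by 2 (x - d). *)
have : 2 *: (x - d) = 0.
  apply: (@stable_translation_eq0 _ _ Phi (refl d *m refl x) x) => //.
  - by move=> y yPhi; rewrite mulmxA; apply/refl_root/refl_root.
  - by rewrite -scalemxAl mulmxA !reflmx_fix.
  rewrite mulmxA [x *m refl d]reflmxE xd2 mulmxBl -scalemxAl.
  rewrite reflmx_root ?pairing_coroot // reflmxE dx2 !scalerBr scalerA opprB !addrA.
  congr (_ - _); rewrite -scaleN1r -{3}(scale1r x) -!scalerDl.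
  by congr (_ *: _); ring.
by move/eqP; rewrite scaler_eq0 pnatr_eq0 subr_eq0 => /eqP.
Qed.

Definition coroot_form (x y : V) : R :=
  \sum_(a <- undup Phi) pairing x (cor a) * pairing y (cor a).
Local Notation B := coroot_form.

Lemma coroot_formC x y : B x y = B y x.
Proof. by apply: eq_bigr => a _; rewrite mulrC. Qed.

Lemma coroot_formDl x y z : B (x + y) z = B x z + B y z.
Proof. by rewrite -big_split; apply: eq_bigr => a _; rewrite pairingD mulrDl. Qed.

Lemma coroot_formZl t x z : B (t *: x) z = t * B x z.
Proof. by rewrite mulr_sumr; apply: eq_bigr => a _; rewrite pairingZ mulrA. Qed.

Lemma coroot_formBl x y z : B (x - y) z = B x z - B y z.
Proof. by rewrite -scaleN1r coroot_formDl coroot_formZl mulN1r. Qed.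

Lemma coroot_form_sumr x (r : seq V) (k : V -> nat) :
  B x (\sum_(s <- r) s *+ k s) = \sum_(s <- r) B x s *+ k s.
Proof.
rewrite coroot_formC; elim: r => [|s r IH].
  by rewrite !big_nil -(scale0r 0) coroot_formZl mul0r.
by rewrite !big_cons coroot_formDl -scaler_nat coroot_formZl IH mulr_natl coroot_formC.
Qed.

Lemma coroot_form_ge0 x : 0 <= B x x.
Proof. by apply: sumr_ge0 => a _; rewrite -expr2 sqr_ge0. Qed.

Lemma coroot_form_gt0 a : a \in Phi -> 0 < B a a.
Proof.
move=> aPhi; rewrite /B (bigD1_seq a) ?mem_undup ?undup_uniq //=.
rewrite pairing_coroot // ltr_wpDr ?mulr_gt0 //.
by apply: sumr_ge0 => c _; rewrite -expr2 sqr_ge0.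
Qed.

Lemma coroot_form_refl b x y : b \in Phi -> x \in Phi -> y \in Phi ->
  B (x *m refl b) (y *m refl b) = B x y.
Proof.
move=> bPhi xPhi yPhi; have bK := reflmxK (pairing_coroot bPhi).
rewrite /B -(perm_big _ (_ : perm_eq [seq a *m refl b | a <- undup Phi] _)).
  rewrite big_map; apply: eq_big_seq => a; rewrite mem_undup => aPhi.
  by rewrite !pairing_coroot_refl ?bK ?refl_root.
apply: uniq_perm; rewrite ?map_inj_uniq ?undup_uniq //; first exact: can_inj bK.
move=> a; rewrite mem_undup; apply/mapP/idP => [[c] | aPhi].
  by rewrite mem_undup => cPhi ->; apply: refl_root.
by exists (a *m refl b); rewrite ?bK // mem_undup refl_root.
Qed.

Lemma coroot_form_pairing x a : x \in Phi -> a \in Phi ->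
  2 * B x a = pairing x (cor a) * B a a.
Proof.
move=> xPhi aPhi; have := coroot_form_refl aPhi xPhi aPhi.
rewrite reflmx_root ?pairing_coroot // reflmxE coroot_formC -scaleN1r.
rewrite !coroot_formZl coroot_formC coroot_formBl coroot_formZl => h; lra.
Qed.

Lemma coroot_form_CauchySchwarz x y : 0 < B y y -> B x y ^+ 2 <= B x x * B y y.
Proof.
move=> yy_gt0; have := coroot_form_ge0 (B y y *: x - B x y *: y).
set u := _ - _; rewrite {1}/u coroot_formBl !coroot_formZl.
rewrite (coroot_formC x u) (coroot_formC y u) /u !coroot_formBl !coroot_formZl.
rewrite (coroot_formC y x) => h; nra.
Qed.

Lemma root_sub_of_form_gt0 x d : x \in Phi -> d \in Phi ->
  0 < B x d -> x = d \/ x - d \in Phi.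
Proof.
move=> xPhi dPhi xd_gt0.
have [K xdK] := pairing_coroot_int dPhi xPhi.
have [L dxL] := pairing_coroot_int xPhi dPhi.
have relK := coroot_form_pairing xPhi dPhi; rewrite xdK in relK.
have relL := coroot_form_pairing dPhi xPhi; rewrite dxL coroot_formC in relL.
have xx_gt0 := coroot_form_gt0 xPhi; have dd_gt0 := coroot_form_gt0 dPhi.
have CS := coroot_form_CauchySchwarz x dd_gt0.
have K_gt0 : 0 < K by rewrite -(ltr0z R); nra.
have L_gt0 : 0 < L by rewrite -(ltr0z R); nra.
(* <x, d^v> <d, x^v> = 4 (x, d)^2 / ((x, x) (d, d)) <= 4 *)
have KL_le4 : K * L <= 4.
  rewrite -(ler_int R) intrM -(ler_pM2r (mulr_gt0 xx_gt0 dd_gt0)).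
  have -> : K%:~R * L%:~R * (B x x * B d d) = 4 * B x d ^+ 2 :> R.
    rewrite (_ : 4 * B x d ^+ 2 = (2 * B x d) * (2 * B x d)); last by ring.
    by rewrite {1}relK relL; ring.
  by rewrite ler_pM2l.
have [K1 | [L1 | [K2 L2]]] : K = 1 \/ L = 1 \/ K = 2 /\ L = 2 by lia.
- by right; have := refl_root dPhi xPhi; rewrite reflmxE xdK K1 scale1r.
- right; have := oppr_root (refl_root xPhi dPhi).
  by rewrite reflmxE dxL L1 scale1r opprB.
- by left; apply: root_eq_of_pairing2; rewrite ?xdK ?dxL ?K2 ?L2.
Qed.

Lemma simple_root_sub (D : seq V) x (k : V -> nat) :
  {subset D <= Phi} -> x \in Phi -> x = \sum_(s <- D) s *+ k s ->
  exists2 d, d \in D & (0 < k d)%N /\ (x = d \/ x - d \in Phi).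
Proof.
move=> DPhi xPhi xE.
have : 0 < \sum_(s <- D) B x s *+ k s.
  by rewrite -coroot_form_sumr -xE coroot_form_gt0.
case: (boolP (has (fun s => (0 < k s)%N && (0 < B x s)) D)).
  case/hasP=> d dD /andP [kd_gt0 xd_gt0] _; exists d => //; split=> //.
  exact: root_sub_of_form_gt0 (DPhi _ dD) xd_gt0.
move/hasPn=> nonpos; rewrite ltNge big_seq sumr_le0 // => s sD.
have := nonpos s sD; case: (posnP (k s)) => [-> | ks_gt0]; first by rewrite mulr0n.
by rewrite /= -leNgt => ?; apply: mulrn_wle0.
Qed.

End CorootForm.

Section NatCombinations.
Variables (R : realFieldType) (n : nat) (D : seq 'rV[R]_n).
Hypothesis uniqD : uniq D.
Local Notation V := 'rV[R]_n.

Lemma Nsum_delta d m : d \in D -> d *+ m = \sum_(s <- D) s *+ ((s == d) * m).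
Proof.
move=> dD; rewrite (bigD1_seq d) //= eqxx mul1n big1 ?addr0 //.
by move=> s /negbTE ->.
Qed.

Lemma Nsum_subn_delta (k : V -> nat) d : d \in D -> (0 < k d)%N ->
  \sum_(s <- D) s *+ k s - d = \sum_(s <- D) s *+ (k s - (s == d)).
Proof.
move=> dD kd_gt0; rewrite !(bigD1_seq d) //= eqxx.
rewrite [in RHS](eq_bigr (fun s => s *+ k s)) => [|s /negbTE ->]; last by rewrite subn0.
by rewrite addrAC -{1}(prednK kd_gt0) mulrSr addrK subn1.
Qed.

Lemma sumn_subn_delta (k : V -> nat) d : d \in D -> (0 < k d)%N ->
  (\sum_(s <- D) (k s - (s == d)) < \sum_(s <- D) k s)%N.
Proof.
move=> dD kd_gt0; rewrite !(bigD1_seq d) //= eqxx.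
rewrite [in X in (X < _)%N](eq_bigr k) => [|s /negbTE ->]; last by rewrite subn0.
by rewrite ltn_add2r subn1 prednK.
Qed.

End NatCombinations.

Section QuotientByDminusJ.
Variables (R : realFieldType) (n : nat) (D J : seq 'rV[R]_n).
Local Notation V := 'rV[R]_n.

Lemma congJ_refl (x : V) : congJ D J x x.
Proof. by exists (fun=> 0); rewrite subrr big1 // => s _; rewrite mulr0z. Qed.

Lemma congJ0_collinearJ (x y : V) : congJ D J x 0 -> collinearJ D J x y.
Proof. by move=> x0; exists 1, 0; rewrite mulr1z mulr0z addr0. Qed.

Hypotheses (uniqD : uniq D) (freeD : free D) (JD : {subset J <= D}).

Definition zcomb (z : V -> int) : V := \sum_(s <- D) s *~ z s.

Lemma zcombB z1 z2 : zcomb z1 - zcomb z2 = zcomb (fun s => z1 s - z2 s).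
Proof.
by rewrite /zcomb -sumrB; apply: eq_bigr => s _; rewrite mulrzBr.
Qed.

Lemma zcombD z1 z2 : zcomb z1 + zcomb z2 = zcomb (fun s => z1 s + z2 s).
Proof. by rewrite /zcomb -big_split; apply: eq_bigr => s _; rewrite mulrzDr. Qed.

Lemma zcombMz z p : zcomb z *~ p = zcomb (fun s => z s * p).
Proof.
rewrite /zcomb (big_morph (fun x : V => x *~ p) (mulrzDl p) (mul0rz _ p)).
by apply: eq_bigr => s _; rewrite mulrzA.
Qed.

Lemma zcomb_nat (k : V -> nat) : \sum_(s <- D) s *+ k s = zcomb (fun s => (k s)%:Z).
Proof. by apply: eq_bigr => s _; rewrite -pmulrn. Qed.

Lemma zcomb_eq0 z : zcomb z = 0 -> {in D, forall s, z s = 0}.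
Proof.
move=> z0 s sD; have /(@vector.freeP _ _ _ (in_tuple D)) free_tuple := freeD.
have sum0 : \sum_(i < size D) (z D`_i)%:~R *: (in_tuple D)`_i = 0.
  rewrite -[RHS]z0 /zcomb (big_nth 0) big_mkord.
  by apply: eq_bigr => i _; rewrite scaler_int.
have sD' : (index s D < size D)%N by rewrite index_mem.
have /eqP := free_tuple _ sum0 (Ordinal sD').
by rewrite /= nth_index // intr_eq0 => /eqP.
Qed.

Lemma congJ_zcomb z1 z2 : congJ D J (zcomb z1) (zcomb z2) <-> {in J, z1 =1 z2}.
Proof.
rewrite /congJ /in_Zspan zcombB /DminusJ; split=> [[h hE] s sJ | z12].
  rewrite big_filter in hE.
  have : zcomb (fun t => z1 t - z2 t - (if t \in J then 0 else h t)) = 0.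
    rewrite -zcombB hE big_mkcond; apply/eqP; rewrite subr_eq0 /zcomb.
    apply/eqP/eq_bigr => t _.
    by case: (t \in J); rewrite ?mulr0z.
  move/zcomb_eq0/(_ s (JD sJ)); rewrite sJ subr0 => /eqP.
  by rewrite subr_eq0 => /eqP.
exists (fun s => z1 s - z2 s); rewrite big_filter big_mkcond /zcomb.
apply: eq_bigr => s _; case: ifP => //= /negbFE sJ.
by rewrite z12 // subrr mulr0z.
Qed.

Lemma congJ_Nsum (k1 k2 : V -> nat) :
  congJ D J (\sum_(s <- D) s *+ k1 s) (\sum_(s <- D) s *+ k2 s) <-> {in J, k1 =1 k2}.
Proof.
rewrite !zcomb_nat congJ_zcomb.
by split=> k12 s /k12 => [/eqP|->] //; rewrite eqz_nat => /eqP.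
Qed.

Lemma congJ_Nsum0 (k : V -> nat) :
  congJ D J (\sum_(s <- D) s *+ k s) 0 <-> {in J, forall s, k s = 0%N}.
Proof.
have Nsum0 : \sum_(s <- D) s *+ 0 = 0 :> V by rewrite big1.
by rewrite -[X in congJ _ _ _ X]Nsum0; apply: congJ_Nsum.
Qed.

Lemma congJ_simple_neq0 d : d \in J -> ~ congJ D J d 0.
Proof.
move=> dJ; rewrite -[d]mulr1n (Nsum_delta uniqD 1 (JD dJ)).
by move/(congJ_Nsum0 _)/(_ d dJ); rewrite eqxx.
Qed.

Lemma noncollinearJ_Nsum (k : V -> nat) g s : g \in J -> s \in J -> s != g ->
  (0 < k s)%N -> ~ collinearJ D J (\sum_(t <- D) t *+ k t) g.
Proof.
move=> gJ sJ sg ks_gt0 [p [q [pq]]].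
have zcomb0 : zcomb (fun=> 0) = 0 by rewrite /zcomb big1 // => t _; rewrite mulr0z.
rewrite -[g]mulr1n (Nsum_delta uniqD 1 (JD gJ)) !zcomb_nat !zcombMz zcombD.
rewrite -[X in congJ _ _ _ X]zcomb0.
move/(congJ_zcomb _ _)=> coef0; move: (coef0 s sJ) (coef0 g gJ) pq.
by rewrite eqxx (negbTE sg) /=; lia.
Qed.

Lemma two_coefs_in_J (k : V -> nat) :
  ~ congJ D J (\sum_(s <- D) s *+ k s) 0 ->
  (forall m d, (1 <= m)%N -> d \in J ->
     ~ congJ D J (\sum_(s <- D) s *+ k s) (d *+ m)) ->
  exists s1 s2, [/\ s1 \in J, s2 \in J, s1 != s2, (0 < k s1)%N & (0 < k s2)%N].
Proof.
move=> k_nz nonmult.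
have [s1 s1J ks1_gt0] : exists2 s1, s1 \in J & (0 < k s1)%N.
  apply/hasP; apply: contra_notT k_nz => /hasPn k0.
  apply/(congJ_Nsum0 _) => s /k0.
  by rewrite lt0n negbK => /eqP.
have [/hasP [s2 s2J /andP [s21 ks2_gt0]] | /hasPn only_s1] :=
  boolP (has (fun s => (s != s1) && (0 < k s)%N) J).
  by exists s1, s2; rewrite eq_sym.
exfalso; apply: (nonmult (k s1) s1 ks1_gt0 s1J).
rewrite (Nsum_delta uniqD _ (JD s1J)); apply/(congJ_Nsum _ _) => s sJ.
have [-> | ss1] := eqVneq s s1; first by rewrite mul1n.
by have := only_s1 s sJ; rewrite ss1 /= lt0n negbK => /eqP ->.
Qed.

End QuotientByDminusJ.

Section Descent.
Variables (R : realFieldType) (n : nat) (Phi D J : seq 'rV[R]_n).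
Variable cor : 'rV[R]_n -> 'cV[R]_n.
Hypotheses (Phi0 : 0 \notin Phi) (corP : {in Phi, forall a, coroot Phi a (cor a)}).
Hypotheses (DPhi : {subset D <= Phi}) (uniqD : uniq D) (freeD : free D).
Hypothesis JD : {subset J <= D}.
Local Notation V := 'rV[R]_n.
Variables (ka : V -> nat) (s1 s2 : V).
Hypotheses (s1J : s1 \in J) (s2J : s2 \in J) (s12 : s1 != s2).
Hypotheses (ka1_gt0 : (0 < ka s1)%N) (ka2_gt0 : (0 < ka s2)%N).

Lemma decompose_by_descent x (k : V -> nat) :
  x \in Phi -> x = \sum_(s <- D) s *+ k s -> {in J, k =1 ka} ->
  exists b g, [/\ positive_root Phi D b, g \in J, ~ collinearJ D J b g &
                  congJ D J (\sum_(s <- D) s *+ ka s) (b + g)].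
Proof.
have [N hk] := ubnP (\sum_(s <- D) k s).
elim: N x k hk => // N IH x k hk xPhi xE kJ.
have [d dD [kd_gt0 [xd | xdPhi]]] := simple_root_sub Phi0 corP DPhi xPhi xE.
  have kdelta : {in J, k =1 fun s => ((s == d) * 1)%N}.
    apply/(congJ_Nsum freeD JD); rewrite -xE -(Nsum_delta uniqD 1 dD) mulr1n xd.
    exact: congJ_refl.
  have at_d s : s \in J -> (0 < ka s)%N -> s = d.
    by move=> sJ; rewrite -kJ // kdelta // muln1 lt0b => /eqP.
  by move: s12; rewrite (at_d s1 s1J ka1_gt0) (at_d s2 s2J ka2_gt0) eqxx.
pose h s := (k s - (s == d))%N.
have xdE : x - d = \sum_(s <- D) s *+ h s by rewrite xE Nsum_subn_delta.
have hJ : {in J, forall s, s != d -> h s = ka s}.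
  by move=> s sJ /negbTE sd; rewrite /h sd subn0 kJ.
have [dJ | dNJ] := boolP (d \in J); last first.
  apply: (IH (x - d) h) => //.
    exact: leq_trans (sumn_subn_delta uniqD dD kd_gt0) hk.
  by move=> s sJ; apply: hJ => //; apply: contraNneq dNJ => <-.
have [s sJ [sd kas_gt0]] : exists2 s, s \in J & s != d /\ (0 < ka s)%N.
  by have [s1d | ?] := eqVneq s1 d; [exists s2 => //; rewrite -s1d eq_sym | exists s1].
exists (x - d), d; split=> //.
- by split=> //; exists h.
- by rewrite xdE; apply: (noncollinearJ_Nsum uniqD freeD JD dJ sJ sd); rewrite hJ.
- by rewrite subrK xE; apply/(congJ_Nsum freeD JD) => t tJ; rewrite kJ.
Qed.

End Descent.

Theorem lemma4p3 (R : realFieldType) (n : nat) (Phi D J : seq 'rV[R]_n)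
    (a : 'rV[R]_n) :
  is_root_system Phi -> is_base Phi D -> {subset J <= D} ->
  (* alpha = pi_J a with a a positive root, alpha <> 0 *)
  positive_root Phi D a -> ~ congJ D J a 0 ->
  (* alpha <> m * alpha_0 for all m >= 1, alpha_0 in pi_J(D) \ {0} *)
  (forall (m : nat) (d : 'rV[R]_n), (1 <= m)%N -> d \in D ->
      ~ congJ D J d 0 -> ~ congJ D J a (d *+ m)) ->
  exists b g : 'rV[R]_n,
    [/\ positive_root Phi D b, ~ congJ D J b 0, g \in J,
        ~ collinearJ D J b g & congJ D J a (b + g)].
Proof.
move=> rs [DPhi uniqD freeD _ _] JD [aPhi [ka aE]] a_nz a_nonmult.
have Phi0 : 0 \notin Phi by case: rs.
have [cor corP] := coroots_exist rs.
have ka_nz : ~ congJ D J (\sum_(s <- D) s *+ ka s) 0 by rewrite -aE.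
have a_nonmultJ m d : (1 <= m)%N -> d \in J ->
    ~ congJ D J (\sum_(s <- D) s *+ ka s) (d *+ m).
  move=> m_ge1 dJ; rewrite -aE.
  exact: a_nonmult m_ge1 (JD _ dJ) (congJ_simple_neq0 uniqD freeD JD dJ).
have [s1 [s2 [s1J s2J s12 ka1_gt0 ka2_gt0]]] :=
  two_coefs_in_J uniqD freeD JD ka_nz a_nonmultJ.
have [b [g [b_pos gJ bg_ncol abg]]] :=
  decompose_by_descent Phi0 corP DPhi uniqD freeD JD s1J s2J s12 ka1_gt0 ka2_gt0
    aPhi aE (fun _ _ => erefl).
exists b, g; split; rewrite ?aE //.
by move/(congJ0_collinearJ g).
Qed.
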